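(* Let $$\begin{array}{ccc} X\times_B Y & \xrightarrow{\pi_2} & Y\\ \downarrow{\scriptstyle\pi_1} & & \downarrow{\scriptstyle p}\\ X & \xrightarrow{q} & B\end{array}$$ be a pullback diagram in the category $\mathbf{Loc}$ of locales, where $\pi_1$ is an isomorphism, $\pi_2$ is an open surjection and $q$ is a coequalizer. Then $p$ is an isomorphism.
   Context: A map of locales is open if its inverse image frame homomorphism has a left adjoint satisfying the Frobenius condition; it is surjective if its inverse image is injective. *)

Record Frame := {
  carrier :> Type;
  fle : carrier -> carrier -> Prop;
  fle_refl : forall a, fle a a;
  fle_trans : forall a b c, fle a b -> fle b c -> fle a c;
  fle_antisym : forall a b, fle a b -> fle b a -> a = b;
  ftop : carrier;
  ftop_max : forall a, fle a ftop;
  fmeet : carrier -> carrier -> carrier;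
  fmeet_glb : forall a b c, fle c (fmeet a b) <-> (fle c a /\ fle c b);
  fjoin : (carrier -> Prop) -> carrier;
  fjoin_ub : forall (P : carrier -> Prop) a, P a -> fle a (fjoin P);
  fjoin_least : forall (P : carrier -> Prop) b,
      (forall a, P a -> fle a b) -> fle (fjoin P) b;
  fdistr : forall (a : carrier) (P : carrier -> Prop),
      fmeet a (fjoin P) = fjoin (fun y => exists x, P x /\ y = fmeet a x)
}.

Arguments fle {f} _ _.
Arguments ftop {f}.
Arguments fmeet {f} _ _.
Arguments fjoin {f} _.

Definition pimage {A B : Type} (f : A -> B) (P : A -> Prop) : B -> Prop :=
  fun y => exists x, P x /\ y = f x.

Record FrameHom (A B : Frame) := {
  hfun :> A -> B;
  hom_top : hfun ftop = ftop;
  hom_meet : forall a b, hfun (fmeet a b) = fmeet (hfun a) (hfun b);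
  hom_join : forall P : A -> Prop, hfun (fjoin P) = fjoin (pimage hfun P)
}.

Arguments hfun {A B} _ _.

Lemma fjoin_ext (F : Frame) (P Q : F -> Prop) :
  (forall x, P x <-> Q x) -> fjoin P = fjoin Q.
Proof.
  intros H; apply fle_antisym; apply fjoin_least; intros a Ha;
  apply fjoin_ub; apply H; exact Ha.
Qed.

Definition hcomp_fun {A B C : Frame} (g : FrameHom B C) (f : FrameHom A B)
  : A -> C := fun a => g (f a).

Lemma hcomp_top {A B C : Frame} (g : FrameHom B C) (f : FrameHom A B) :
  hcomp_fun g f ftop = ftop.
Proof. unfold hcomp_fun; rewrite hom_top, hom_top; reflexivity. Qed.

Lemma hcomp_meet {A B C : Frame} (g : FrameHom B C) (f : FrameHom A B) a b :
  hcomp_fun g f (fmeet a b) = fmeet (hcomp_fun g f a) (hcomp_fun g f b).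
Proof. unfold hcomp_fun; rewrite hom_meet, hom_meet; reflexivity. Qed.

Lemma hcomp_join {A B C : Frame} (g : FrameHom B C) (f : FrameHom A B) P :
  hcomp_fun g f (fjoin P) = fjoin (pimage (hcomp_fun g f) P).
Proof.
  unfold hcomp_fun; rewrite hom_join, hom_join; apply fjoin_ext.
  intros z; unfold pimage; split.
  - intros [y [[x [Hx ->]] ->]]; exists x; split; auto.
  - intros [x [Hx ->]]; exists (f x); split; auto; exists x; auto.
Qed.

Definition hcomp {A B C : Frame} (g : FrameHom B C) (f : FrameHom A B)
  : FrameHom A C :=
  {| hfun := hcomp_fun g f; hom_top := hcomp_top g f;
     hom_meet := hcomp_meet g f; hom_join := hcomp_join g f |}.

Lemma hid_join (A : Frame) (P : A -> Prop) :
  (fun a : A => a) (fjoin P) = fjoin (pimage (fun a : A => a) P).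
Proof.
  apply fjoin_ext; intros x; unfold pimage; split.
  - intros Hx; exists x; auto.
  - intros [y [Hy ->]]; exact Hy.
Qed.

Definition hid (A : Frame) : FrameHom A A :=
  {| hfun := fun a => a; hom_top := eq_refl;
     hom_meet := fun _ _ => eq_refl; hom_join := hid_join A |}.

(** * The category Loc = Frm^op.
    A locale is represented by its frame of opens; a locale map
    f : X -> Y is a frame homomorphism f^* : O(Y) -> O(X). *)
Definition Locale := Frame.
Definition LocMap (X Y : Locale) := FrameHom Y X.

Definition inv_img {X Y : Locale} (f : LocMap X Y) : Y -> X := hfun f.

Definition lcomp {X Y Z : Locale} (g : LocMap Y Z) (f : LocMap X Y)
  : LocMap X Z := hcomp f g.

Definition lid (X : Locale) : LocMap X X := hid X.

Definition leq_map {X Y : Locale} (f g : LocMap X Y) : Prop :=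
  forall b : Y, inv_img f b = inv_img g b.

Definition loc_iso {X Y : Locale} (f : LocMap X Y) : Prop :=
  exists g : LocMap Y X,
    leq_map (lcomp g f) (lid X) /\ leq_map (lcomp f g) (lid Y).

Definition loc_open {X Y : Locale} (f : LocMap X Y) : Prop :=
  exists l : X -> Y,
    (forall (a : X) (b : Y), fle (l a) b <-> fle a (inv_img f b)) /\
    (forall (a : X) (b : Y), l (fmeet a (inv_img f b)) = fmeet (l a) b).

Definition loc_surj {X Y : Locale} (f : LocMap X Y) : Prop :=
  forall b b' : Y, inv_img f b = inv_img f b' -> b = b'.

Definition is_pullback {P X Y B : Locale}
  (pi1 : LocMap P X) (pi2 : LocMap P Y) (q : LocMap X B) (p : LocMap Y B)
  : Prop :=
  leq_map (lcomp q pi1) (lcomp p pi2) /\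
  forall (Z : Locale) (f : LocMap Z X) (g : LocMap Z Y),
    leq_map (lcomp q f) (lcomp p g) ->
    exists h : LocMap Z P,
      leq_map (lcomp pi1 h) f /\ leq_map (lcomp pi2 h) g /\
      forall h' : LocMap Z P,
        leq_map (lcomp pi1 h') f -> leq_map (lcomp pi2 h') g ->
        leq_map h' h.

Definition is_coequalizer {X B : Locale} (q : LocMap X B) : Prop :=
  exists (W : Locale) (f g : LocMap W X),
    leq_map (lcomp q f) (lcomp q g) /\
    forall (Z : Locale) (h : LocMap X Z),
      leq_map (lcomp h f) (lcomp h g) ->
      exists k : LocMap B Z,
        leq_map (lcomp k q) h /\
        forall k' : LocMap B Z, leq_map (lcomp k' q) h -> leq_map k' k.

From Stdlib Require Import Setoid.

(* Put s := pi2 o pi1^-1 : X -> Y.  Then p o s = q, and universality of the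
   pullback shows that s coequalizes every pair that q coequalizes, so
   s = k o q for some k : B -> Y.  From p o k o q = p o s = q we get
   p o k = 1, since coequalizers are epimorphisms; from
   k o p o pi2 = k o q o pi1 = s o pi1 = pi2 we get k o p = 1, since
   surjections (injective inverse images) are epimorphisms. *)

Lemma inv_img_lcomp {X Y Z : Locale} (g : LocMap Y Z) (f : LocMap X Y) (c : Z) :
  inv_img (lcomp g f) c = inv_img f (inv_img g c).
Proof. reflexivity. Qed.

Add Parametric Relation (X Y : Locale) : (LocMap X Y) (@leq_map X Y)
  reflexivity proved by (fun f b => eq_refl)
  symmetry proved by (fun f g H b => eq_sym (H b))
  transitivity proved by (fun f g h H H' b => eq_trans (H b) (H' b))
  as leq_map_rel.

Add Parametric Morphism (X Y Z : Locale) : (@lcomp X Y Z)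
  with signature (@leq_map Y Z) ==> (@leq_map X Y) ==> (@leq_map X Z)
  as lcomp_mor.
Proof.
  intros g g' Hg f f' Hf c.
  rewrite !inv_img_lcomp, Hg.
  apply Hf.
Qed.

Lemma lcomp_assoc {W X Y Z : Locale}
  (h : LocMap Y Z) (g : LocMap X Y) (f : LocMap W X) :
  leq_map (lcomp h (lcomp g f)) (lcomp (lcomp h g) f).
Proof. intros d; reflexivity. Qed.

Lemma lcomp_id_l {X Y : Locale} (f : LocMap X Y) : leq_map (lcomp (lid Y) f) f.
Proof. intros b; reflexivity. Qed.

Lemma lcomp_id_r {X Y : Locale} (f : LocMap X Y) : leq_map (lcomp f (lid X)) f.
Proof. intros b; reflexivity. Qed.

Lemma loc_surj_cancel {X Y Z : Locale} {e : LocMap X Y} {f g : LocMap Y Z} :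
  loc_surj e -> leq_map (lcomp f e) (lcomp g e) -> leq_map f g.
Proof. intros surj_e H c. apply surj_e, H. Qed.

Definition is_coequalizer_of {W X B : Locale}
  (f g : LocMap W X) (q : LocMap X B) : Prop :=
  leq_map (lcomp q f) (lcomp q g) /\
  forall (Z : Locale) (h : LocMap X Z),
    leq_map (lcomp h f) (lcomp h g) ->
    exists k : LocMap B Z,
      leq_map (lcomp k q) h /\
      forall k' : LocMap B Z, leq_map (lcomp k' q) h -> leq_map k' k.

Section Coequalizer.

Context {W X B : Locale} {f g : LocMap W X} {q : LocMap X B}.
Hypothesis coeq : is_coequalizer_of f g q.

Lemma coequalizer_factor (Z : Locale) (h : LocMap X Z) :
  leq_map (lcomp h f) (lcomp h g) -> exists k : LocMap B Z, leq_map (lcomp k q) h.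
Proof.
  intros Hh.
  destruct (proj2 coeq Z h Hh) as [k [Hk _]].
  exists k; exact Hk.
Qed.

Lemma coequalizer_cancel (Z : Locale) (k k' : LocMap B Z) :
  leq_map (lcomp k q) (lcomp k' q) -> leq_map k k'.
Proof.
  intros Hkk'.
  assert (Hcoeq : leq_map (lcomp (lcomp k q) f) (lcomp (lcomp k q) g)).
  { rewrite <- !lcomp_assoc, (proj1 coeq). reflexivity. }
  destruct (proj2 coeq Z (lcomp k q) Hcoeq) as [k0 [_ uniq]].
  transitivity k0.
  - apply uniq; reflexivity.
  - symmetry; apply uniq; symmetry; exact Hkk'.
Qed.

End Coequalizer.

Section PullbackAlongIso.

Context {P X Y B : Locale} {pi1 : LocMap P X} {pi2 : LocMap P Y}
  {q : LocMap X B} {p : LocMap Y B} {j : LocMap X P}.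
Hypothesis pb : is_pullback pi1 pi2 q p.
Hypothesis j_pi1 : leq_map (lcomp j pi1) (lid P).
Hypothesis pi1_j : leq_map (lcomp pi1 j) (lid X).

Lemma pullback_iso_factor : leq_map (lcomp p (lcomp pi2 j)) q.
Proof.
  rewrite lcomp_assoc, <- (proj1 pb), <- lcomp_assoc, pi1_j.
  apply lcomp_id_r.
Qed.

Lemma pullback_iso_coequalizes (W : Locale) (f g : LocMap W X) :
  leq_map (lcomp q f) (lcomp q g) ->
  leq_map (lcomp (lcomp pi2 j) f) (lcomp (lcomp pi2 j) g).
Proof.
  intros Hfg.
  assert (Hsq : leq_map (lcomp q f) (lcomp p (lcomp (lcomp pi2 j) g))).
  { rewrite lcomp_assoc, pullback_iso_factor. exact Hfg. }
  destruct (proj2 pb W f (lcomp (lcomp pi2 j) g) Hsq) as [h [pi1_h [pi2_h _]]].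
  rewrite <- pi1_h, <- pi2_h, <- !lcomp_assoc, (lcomp_assoc j), j_pi1,
    lcomp_id_l.
  reflexivity.
Qed.

End PullbackAlongIso.

Theorem lemma2p3 (P X Y B : Locale)
  (pi1 : LocMap P X) (pi2 : LocMap P Y) (q : LocMap X B) (p : LocMap Y B) :
  is_pullback pi1 pi2 q p ->
  loc_iso pi1 ->
  loc_open pi2 -> loc_surj pi2 ->
  is_coequalizer q ->
  loc_iso p.
Proof.
  intros pb [j [j_pi1 pi1_j]] _ surj_pi2 [W [f [g coeq]]].
  destruct (coequalizer_factor coeq _ (lcomp pi2 j)) as [k k_q].
  { apply (pullback_iso_coequalizes pb j_pi1 pi1_j), (proj1 coeq). }
  exists k; split.
  - apply (loc_surj_cancel surj_pi2).
    rewrite <- lcomp_assoc, <- (proj1 pb), lcomp_assoc, k_q, <- lcomp_assoc,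
      j_pi1, lcomp_id_r, lcomp_id_l.
    reflexivity.
  - apply (coequalizer_cancel coeq).
    rewrite <- lcomp_assoc, k_q, (pullback_iso_factor pb pi1_j), lcomp_id_l.
    reflexivity.
Qed.
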